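(* Consider a one-dimensional SOCO problem with norm $\|\cdot\|$, let $\theta\ge1$ and $N$ the norm with $N(1)=\theta\|1\|$. Then, with probability $1$, $\mathbb{E}[SC(RBG(N))]\le OPT_N/\theta$.
   Context: The decision space is a compact interval $F=[x_L,x_H]\subseteq\mathbb{R}^+$, $\|\cdot\|$ is a norm on $\mathbb{R}$, and cost functions $c^t:F\to\mathbb{R}^+$ are convex with uniformly bounded subgradients. Algorithm RBG($N$): define $w^0(x)=N(x)$ and $w^t(x)=\min_{y\in F}\{w^{t-1}(y)+c^t(y)+N(x-y)\}$; draw $r$ uniformly at random from $(-1,1)$ once; at each time $t$ choose $x^t\in F$ minimizing $Y^t(x)=w^{t-1}(x)+rN(x)$. Switching cost (in the original norm): $SC(RBG(N))=\sum_{t=1}^T\|x^{t+1}-x^t\|$. $OPT_N=\min_{(x^1,\dots,x^T)\in F^T}\sum_{t=1}^Tc^t(x^t)+N(x^t-x^{t-1})$ with $x^0=0$. The expectation is over $r$. *)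

From HB Require Import structures.
From mathcomp Require Import all_boot all_order all_algebra.
From mathcomp Require Import all_classical all_reals all_analysis.
Set Implicit Arguments. Unset Strict Implicit. Unset Printing Implicit Defensive.
Import Order.TTheory GRing.Theory Num.Theory.
Import numFieldNormedType.Exports.
Local Open Scope classical_set_scope.
Local Open Scope ring_scope.

Section SOCO.
Variable R : realType.

Definition is_norm (n : R -> R) : Prop :=
  [/\ forall x, 0 <= n x,
      forall x, n x = 0 -> x = 0,
      forall a x, n (a * x) = `|a| * n x
    & forall x y, n (x + y) <= n x + n y].

Definition convex_on (F : set R) (f : R -> R) : Prop :=
  forall x y (l : R), F x -> F y -> 0 <= l <= 1 ->
    f (l * x + (1 - l) * y) <= l * f x + (1 - l) * f y.

Definition subgradient (F : set R) (f : R -> R) (x g : R) : Prop :=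
  forall y, F y -> f x + g * (y - x) <= f y.

Fixpoint rbg_w (F : set R) (N : R -> R) (c : nat -> R -> R) (t : nat) : R -> R :=
  match t with
  | 0 => N
  | t'.+1 => fun x =>
      inf [set rbg_w F N c t' y + c t'.+1 y + N (x - y) | y in F]
  end.

Definition rbg_Y (F : set R) (N : R -> R) (c : nat -> R -> R) (r : R) (t : nat)
  (x : R) : R := rbg_w F N c t.-1 x + r * N x.

Definition switching_cost (nrm : R -> R) (T : nat) (X : nat -> R) : R :=
  \sum_(1 <= t < T.+1) nrm (X t.+1 - X t).

Definition opt_cost (F : set R) (N : R -> R) (c : nat -> R -> R) (T : nat) : R :=
  inf [set (\sum_(1 <= t < T.+1) (c t (s t) + N (s t - s t.-1)))
       | s in [set s : nat -> R | s 0%N = 0 /\ forall t, (1 <= t <= T)%N -> F (s t)]].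

End SOCO.

(* For a fixed draw r, the value G_k(r) = min_x Y^{k+1}(x) = min_x w^k(x) + r N(x) is
   concave in r with supergradient N(1) x^{k+1}(r) (decisions are nonnegative), so
   x^{k+1} is nonincreasing in r. Comparing secant slopes of G_k and G_{k+1} on a
   fine grid bounds the integral over r of |x^{k+2}(r) - x^{k+1}(r)| by the total
   variation of the gap G_{k+1} - G_k, divided by N(1). Convexity of c^{k+1} makes
   this gap nonnegative and quasiconvex, so its variation is at most its values at
   r = -1 and r = 1. Summing over k telescopes to G_T(-1) + G_T(1) <= 2 G_T(0),
   and G_T(0) <= OPT_N. Since N(1) = theta ||1|| and ||x|| = |x| ||1||, the
   expected switching cost is at most OPT_N / theta. *)

From HB Require Import structures.
From mathcomp Require Import all_boot all_order all_algebra.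
From mathcomp Require Import all_classical all_reals all_analysis.
From mathcomp Require Import lra ring.
Set Implicit Arguments. Unset Strict Implicit. Unset Printing Implicit Defensive.
Import Order.TTheory GRing.Theory Num.Theory.
Import numFieldNormedType.Exports.
Local Open Scope classical_set_scope.
Local Open Scope ring_scope.

Section RealFacts.
Variable R : realType.

Lemma normB_le_normB_add_widths (u v p q l1 h1 l2 h2 : R) :
  l1 <= u <= h1 -> l1 <= p <= h1 -> l2 <= v <= h2 -> l2 <= q <= h2 ->
  `|v - u| <= `|q - p| + (h1 - l1) + (h2 - l2).
Proof.
move=> /andP[? ?] /andP[? ?] /andP[? ?] /andP[? ?].
have := ler_norm (q - p); have := ler_norm (p - q); rewrite distrC => ? ?.
by rewrite ler_norml; apply/andP; split; lra.
Qed.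

Lemma sum_absB_quasiconvex (v : nat -> R) n :
  (forall i j k, (i < j)%N -> (j < k)%N -> (k <= n)%N ->
     v j <= Num.max (v i) (v k)) ->
  exists j, [/\ (j <= n)%N, forall i, (i <= n)%N -> v j <= v i &
    \sum_(0 <= i < n) `|v i.+1 - v i| <= v 0%N + v n - 2 * v j].
Proof.
elim: n => [|n IH] vq.
  exists 0%N; split=> // [i|]; first by rewrite leqn0 => /eqP ->.
  by rewrite big_geq //; lra.
have [|j [jn jmin sumj]] := IH.
  by move=> i j k ij jk kn; apply: vq => //; apply: leqW.
rewrite big_nat_recr //=.
have [vn_le|vn_gt] := leP (v n) (v n.+1).
  exists j; split=> [|i|]; first exact: leqW.
    rewrite leq_eqVlt => /orP[/eqP ->|]; last by rewrite ltnS; apply: jmin.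
    by have := jmin n (leqnn n); lra.
  by rewrite ger0_norm ?subr_ge0 //; lra.
have vn_min i : (i <= n)%N -> v n <= v i.
  rewrite leq_eqVlt => /orP[/eqP -> //|iltn].
  by have := vq i n n.+1 iltn (ltnSn n) (leqnn _); rewrite le_max => /orP[|]; lra.
exists n.+1; split=> // [i|].
  rewrite leq_eqVlt => /orP[/eqP -> //|]; rewrite ltnS => /vn_min; lra.
by have := vn_min j jn; rewrite ltr0_norm ?subr_lt0 //; lra.
Qed.

Lemma sum_absB_le_ends (v : nat -> R) n :
  (forall i, (i <= n)%N -> 0 <= v i) ->
  (forall i j k, (i < j)%N -> (j < k)%N -> (k <= n)%N ->
     v j <= Num.max (v i) (v k)) ->
  \sum_(0 <= i < n) `|v i.+1 - v i| <= v 0%N + v n.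
Proof.
move=> v_ge0 /sum_absB_quasiconvex[j [jn _ sumj]].
by have := v_ge0 j jn; lra.
Qed.

Lemma is_normE (n : R -> R) : is_norm n -> forall x, n x = `|x| * n 1.
Proof. by case=> _ _ nZ _ x; rewrite -nZ mulr1. Qed.

Lemma is_norm1_gt0 (n : R -> R) : is_norm n -> 0 < n 1.
Proof.
case=> n_ge0 n_eq0 _ _; rewrite lt_neqAle n_ge0 andbT; apply/eqP => /esym /n_eq0.
by move/eqP; rewrite oner_eq0.
Qed.

Lemma itv_interior (r : R) : -1 <= r <= 1 -> r != -1 -> r != 1 -> -1 < r < 1.
Proof.
case/andP=> r1 r2 rN1 r_1.
by rewrite lt_neqAle eq_sym rN1 r1 lt_neqAle r_1 r2.
Qed.

Lemma inf_img_le (A : set R) (f : R -> R) (b y : R) :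
  (forall z, A z -> b <= f z) -> A y -> inf [set f z | z in A] <= f y.
Proof.
move=> fb Ay; apply: ge_inf; last by exists y.
by exists b => _ [z Az <-]; apply: fb.
Qed.

Lemma le_inf_img (A : set R) (f : R -> R) (b y : R) :
  A y -> (forall z, A z -> b <= f z) -> b <= inf [set f z | z in A].
Proof.
move=> Ay fb; apply: lb_le_inf; first by exists (f y), y.
by move=> _ [z Az <-]; apply: fb.
Qed.

Lemma convex_on_monotone_split (A : set R) (f : R -> R) x :
  convex_on A f -> A x ->
  (forall y, A y -> x <= y -> f x <= f y) \/ (forall y, A y -> y <= x -> f x <= f y).
Proof.
move=> f_cvx Ax.
have [|right_fails] := pselect (forall y, A y -> x <= y -> f x <= f y); first by left.
right => y Ay yx; rewrite leNgt; apply/negP => fy_lt.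
apply: right_fails => y1 Ay1 xy1; rewrite leNgt; apply/negP => fy1_lt.
have y_lt : y < x by rewrite lt_neqAle yx andbT; apply: contraTneq fy_lt => ->; rewrite ltxx.
have y1_gt : x < y1.
  by rewrite lt_neqAle xy1 andbT; apply: contraTneq fy1_lt => <-; rewrite ltxx.
pose l := (y1 - x) / (y1 - y).
have l_gt0 : 0 < l by rewrite divr_gt0 // subr_gt0 //; apply: lt_trans y1_gt.
have l_le1 : l <= 1 by rewrite ler_pdivrMr ?subr_gt0; [lra | apply: lt_trans y1_gt].
have lE : l * y + (1 - l) * y1 = x.
  by rewrite /l; field; rewrite subr_eq0 gt_eqF //; apply: lt_trans y1_gt.
have := f_cvx y y1 l Ay Ay1; rewrite ltW //= l_le1 lE => /(_ isT).
by nra.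
Qed.

End RealFacts.
Arguments inf_img_le {R A f} b {y}.
Arguments le_inf_img {R A f b y}.

Section GridIntegral.
Variable R : realType.
Local Notation mu := (@lebesgue_measure R).

Lemma integral_itvoc_le_const (f : R -> R) (lo hi C : R) : lo <= hi ->
  measurable_fun `]lo, hi] f ->
  (forall r, lo < r <= hi -> 0 <= f r <= C) ->
  (\int[mu]_(r in `]lo, hi]) (f r)%:E <= (C * (hi - lo))%:E)%E.
Proof.
move=> lohi mf fC.
apply: (@le_trans _ _ (\int[mu]_(r in `]lo, hi]) (cst C%:E) r)%E).
  apply: ge0_le_integral => //.
  - by move=> r; rewrite /= in_itv /= => /fC /andP[? ?]; rewrite lee_fin.
  - exact/measurable_realfun.measurable_EFinP.
  - by move=> r; rewrite /= in_itv /= => /fC /andP[? ?]; rewrite lee_fin.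
rewrite integral_cst //= lebesgue_measure_itv /= lte_fin.
have [lh|hl] := ltP lo hi; first by rewrite -EFinD EFinM.
have -> : hi = lo by apply/eqP; rewrite eq_le hl lohi.
by rewrite subrr mulr0 mule0.
Qed.

Lemma integral_itvoc_grid_le (f : R -> R) (s C : nat -> R) (n : nat) :
  {homo s : i j / (i <= j)%N >-> i <= j} -> (forall r, 0 <= f r) ->
  measurable_fun `]s 0%N, s n] f ->
  (forall i r, (i < n)%N -> s i < r <= s i.+1 -> 0 <= f r <= C i) ->
  (\int[mu]_(r in `]s 0%N, s n]) (f r)%:E <=
     (\sum_(0 <= i < n) C i * (s i.+1 - s i))%:E)%E.
Proof.
move=> s_mono f_ge0 mf fC.
suff : forall k, (k <= n)%N -> (\int[mu]_(r in `]s 0%N, s k]) (f r)%:E <=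
    (\sum_(0 <= i < k) C i * (s i.+1 - s i))%:E)%E by apply.
elim=> [_|k IH kn]; first by rewrite set_itvoc0 integral_set0 big_geq.
have s0k : (BRight (s 0%N) <= BRight (s k))%O by rewrite bnd_simp s_mono.
have skk1 : (BRight (s k) <= BRight (s k.+1))%O by rewrite bnd_simp s_mono.
have mfk1 : measurable_fun `]s 0%N, s k.+1] f.
  by apply: measurable_funS mf => //; apply: subset_itvl; rewrite bnd_simp s_mono.
rewrite (itv_bndbnd_setU s0k skk1) ge0_integral_setU //; last 3 first.
- by rewrite -itv_bndbnd_setU //; exact/measurable_realfun.measurable_EFinP.
- by move=> r _; rewrite lee_fin.
- apply/eqP; rewrite -subset0 => r [] /=; rewrite !in_itv /=.
  by move=> /andP[_ r1] /andP[r2 _]; have := lt_le_trans r2 r1; rewrite ltxx.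
rewrite big_nat_recr //= EFinD; apply: leeD; first exact/IH/ltnW.
apply: integral_itvoc_le_const; first exact: s_mono.
  by apply: measurable_funS mfk1 => //; apply: subset_itvr; rewrite bnd_simp s_mono.
by move=> r; apply: fC.
Qed.

End GridIntegral.

Section UniformGrid.
Variables (R : realType) (n : nat).
Hypothesis n_gt0 : (0 < n)%N.

Definition unif_grid (i : nat) : R := -1 + i%:R * (2 / n%:R).

Lemma unif_grid0 : unif_grid 0 = -1.
Proof. by rewrite /unif_grid mul0r addr0. Qed.

Lemma unif_grid_last : unif_grid n = 1.
Proof.
have nR : n%:R != 0 :> R by rewrite pnatr_eq0 -lt0n.
by rewrite /unif_grid mulrC divfK //; lra.
Qed.

Lemma unif_gridS i : unif_grid i.+1 - unif_grid i = 2 / n%:R.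
Proof. by rewrite /unif_grid -addn1 natrD; lra. Qed.

Lemma unif_grid_step_gt0 : 0 < 2 / n%:R :> R.
Proof. by rewrite divr_gt0 ?ltr0n. Qed.

Lemma unif_grid_lt : {homo unif_grid : i j / (i < j)%N >-> i < j}.
Proof.
by move=> i j ij; rewrite /unif_grid ltrD2l ltr_pM2r ?ltr_nat ?unif_grid_step_gt0.
Qed.

Lemma unif_grid_le : {homo unif_grid : i j / (i <= j)%N >-> i <= j}.
Proof. exact/ltW_homo/unif_grid_lt. Qed.

Lemma unif_grid_range i : (i <= n)%N -> -1 <= unif_grid i <= 1.
Proof. by move=> iN; rewrite -unif_grid0 -unif_grid_last !unif_grid_le. Qed.

End UniformGrid.
Arguments unif_grid {R} n i.

Section SupergradientGap.
Variables (R : realType) (a : R).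
Hypothesis a_gt0 : 0 < a.
Local Notation mu := (@lebesgue_measure R).

Section Secant.
Variables (K Z : R -> R).
Hypothesis K_supergrad : forall r s, -1 <= r <= 1 -> -1 <= s <= 1 ->
  K s <= K r + (s - r) * a * Z r.

Lemma secant_slope_between p q : -1 <= p -> p < q -> q <= 1 ->
  Z q <= (K q - K p) / ((q - p) * a) <= Z p.
Proof.
move=> p1 pq q1.
have pI : -1 <= p <= 1 by apply/andP; split; lra.
have qI : -1 <= q <= 1 by apply/andP; split; lra.
have qpa : 0 < (q - p) * a by rewrite mulr_gt0 // subr_gt0.
have := K_supergrad pI qI; have := K_supergrad qI pI => ? ?.
by rewrite ler_pdivlMr // ler_pdivrMr //; apply/andP; split; nra.
Qed.

Lemma supergrad_noninc r s : -1 <= r -> r <= s -> s <= 1 -> Z s <= Z r.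
Proof.
move=> r1; rewrite le_eqVlt => /orP[/eqP -> //|rs] s1.
by have /andP[] := secant_slope_between r1 rs s1; apply: le_trans.
Qed.

End Secant.

Variables (xL xH : R) (G H X Y : R -> R).
Hypothesis X_range : forall r, -1 <= r <= 1 -> xL <= X r <= xH.
Hypothesis Y_range : forall r, -1 <= r <= 1 -> xL <= Y r <= xH.
Hypothesis G_supergrad : forall r s, -1 <= r <= 1 -> -1 <= s <= 1 ->
  G s <= G r + (s - r) * a * X r.
Hypothesis H_supergrad : forall r s, -1 <= r <= 1 -> -1 <= s <= 1 ->
  H s <= H r + (s - r) * a * Y r.
Hypothesis gap_ge0 : forall r, -1 <= r <= 1 -> 0 <= H r - G r.
Hypothesis gap_quasiconvex : forall r s u, -1 <= r -> r < s -> s < u -> u <= 1 ->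
  H s - G s <= Num.max (H r - G r) (H u - G u).
Hypothesis X_meas : measurable_fun (`](-1)%R, 1%R[ : set R) X.
Hypothesis Y_meas : measurable_fun (`](-1)%R, 1%R[ : set R) Y.

Local Notation gap r := (H r - G r).

Lemma gap_cell_le p q r : -1 <= p -> p < r <= q -> q <= 1 ->
  `|Y r - X r| <= `|gap q - gap p| / ((q - p) * a) + (X p - X q) + (Y p - Y q).
Proof.
move=> p1 /andP[pr rq] q1; have pq := lt_le_trans pr rq.
have Xr : X q <= X r <= X p.
  by apply/andP; split; apply: (supergrad_noninc G_supergrad); lra.
have Yr : Y q <= Y r <= Y p.
  by apply/andP; split; apply: (supergrad_noninc H_supergrad); lra.
have XG := secant_slope_between G_supergrad p1 pq q1.
have YH := secant_slope_between H_supergrad p1 pq q1.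
apply: le_trans (normB_le_normB_add_widths Xr XG Yr YH) _.
rewrite -mulrBl (_ : H q - H p - (G q - G p) = gap q - gap p); last by ring.
by rewrite normrM normfV (gtr0_norm (_ : 0 < (q - p) * a)) // mulr_gt0 ?subr_gt0.
Qed.

Lemma gap_grid_sum_le n : (0 < n)%N ->
  \sum_(0 <= i < n)
     (`|gap (unif_grid n i.+1) - gap (unif_grid n i)| / ((2 / n%:R) * a)
      + (X (unif_grid n i) - X (unif_grid n i.+1))
      + (Y (unif_grid n i) - Y (unif_grid n i.+1)))
     * (unif_grid n i.+1 - unif_grid n i)
  <= (gap (-1) + gap 1) / a + 4 * (xH - xL) / n%:R.
Proof.
move=> n_gt0; set g := unif_grid n; set h : R := 2 / n%:R.
have h_gt0 : 0 < h := unif_grid_step_gt0 R n_gt0.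
have g_range i : (i <= n)%N -> -1 <= g i <= 1 := @unif_grid_range R n n_gt0 i.
have telescope (Z : R -> R) :
    \sum_(0 <= i < n) (Z (g i) - Z (g i.+1)) = Z (g 0%N) - Z (g n).
  rewrite (@telescope_sumr_eq _ _ _ (fun k => - Z (g k))) //; first lra.
  by move=> k _ /=; lra.
have tv : \sum_(0 <= i < n) `|gap (g i.+1) - gap (g i)| <= gap (-1) + gap 1.
  rewrite -(unif_grid0 R n) -(unif_grid_last R n_gt0).
  apply: (sum_absB_le_ends (v := fun i => gap (g i))) => [i iN|i j k ij jk kN].
    exact/gap_ge0/g_range.
  have /andP[gi1 _] := g_range _ (ltnW (leq_trans (ltn_trans ij jk) kN)).
  have /andP[_ gk1] := g_range _ kN.
  by apply: gap_quasiconvex => //; apply: unif_grid_lt.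
under eq_bigr do rewrite unif_gridS -/h.
rewrite -mulr_suml big_split big_split /= -mulr_suml !telescope.
set S := \sum_(0 <= i < n) _.
have := X_range (g_range _ (leq0n n)); have := X_range (g_range _ (leqnn n)).
have := Y_range (g_range _ (leq0n n)); have := Y_range (g_range _ (leqnn n)).
move=> /andP[? ?] /andP[? ?] /andP[? ?] /andP[? ?].
have -> : (S / (h * a) + (X (g 0%N) - X (g n)) + (Y (g 0%N) - Y (g n))) * h
    = S / a + h * ((X (g 0%N) - X (g n)) + (Y (g 0%N) - Y (g n))).
  by field; rewrite !gt_eqF.
rewrite (_ : 4 * (xH - xL) / n%:R = h * (2 * (xH - xL))); last by rewrite /h; ring.
apply: lerD; first by rewrite ler_pM2r ?invr_gt0.
by rewrite ler_pM2l //; lra.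
Qed.

Lemma gap_abs_measurable :
  measurable_fun (`](-1)%R, 1%R] : set R) (fun r => `|Y r - X r|).
Proof.
rewrite -(setUitv1 true); last by rewrite bnd_simp; lra.
apply/measurable_funU => //; split; last exact: measurable_fun_set1.
apply: measurableT_comp; first exact: measurable_realfun.normr_measurable.
exact: measurable_realfun.measurable_funB.
Qed.

Lemma integral_gap_grid_le n : (0 < n)%N ->
  (\int[mu]_(r in (`](-1)%R, 1%R[ : set R)) (`|Y r - X r|)%:E <=
    ((gap (-1) + gap 1) / a + 4 * (xH - xL) / n%:R)%:E)%E.
Proof.
move=> n_gt0.
apply: (@le_trans _ _ (\int[mu]_(r in (`](-1)%R, 1%R] : set R)) (`|Y r - X r|)%:E)%E).
  apply: ge0_subset_integral => //.
    by apply/measurable_realfun.measurable_EFinP; exact: gap_abs_measurable.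
  by apply: subset_itvl; rewrite bnd_simp.
have -> : (`](-1)%R, 1%R]%classic : set R) = `]unif_grid n 0, unif_grid n n]%classic.
  by rewrite unif_grid0 unif_grid_last.
apply: le_trans; first apply: (integral_itvoc_grid_le (unif_grid_le R n_gt0)).
- by move=> r.
- by rewrite unif_grid0 unif_grid_last //; exact: gap_abs_measurable.
- move=> i r iN ri; rewrite normr_ge0 /=.
  have /andP[p1 _] := unif_grid_range R n_gt0 (ltnW iN).
  have /andP[_ q1] := unif_grid_range R n_gt0 iN.
  by have := gap_cell_le p1 ri q1; rewrite unif_gridS; exact.
by rewrite lee_fin gap_grid_sum_le.
Qed.

Lemma integral_gap_le :
  (\int[mu]_(r in (`](-1)%R, 1%R[ : set R)) (`|Y r - X r|)%:E <=
    ((gap (-1) + gap 1) / a)%:E)%E.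
Proof.
apply/lee_addgt0Pr => e e_gt0.
have /andP[? ?] : xL <= X 0 <= xH by apply: X_range; rewrite lerN10 ler01.
pose n := (Num.truncn (4 * (xH - xL) / e)).+1.
apply: le_trans (integral_gap_grid_le (ltn0Sn _ : (0 < n)%N)) _.
have n_gt0 : 0 < n%:R :> R by rewrite ltr0n.
rewrite -EFinD lee_fin lerD2l ler_pdivrMr //.
by have := truncnS_gt (4 * (xH - xL) / e); rewrite -/n ltr_pdivrMr //; lra.
Qed.

End SupergradientGap.

Section RBG.
Variables (R : realType) (xL xH : R) (N : R -> R) (c : nat -> R -> R) (T : nat).
Variable X : R -> nat -> R.
Hypothesis xL_ge0 : 0 <= xL.
Hypothesis xL_le_xH : xL <= xH.
Hypothesis N_norm : is_norm N.
Hypothesis c_ge0 : forall t, (1 <= t <= T)%N -> forall x, xL <= x <= xH -> 0 <= c t x.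
Hypothesis c_convex : forall t, (1 <= t <= T)%N -> convex_on `[xL, xH] (c t).
Hypothesis X_choice : forall r, -1 < r < 1 -> forall t, (1 <= t <= T.+1)%N ->
  xL <= X r t <= xH /\
  forall y, xL <= y <= xH ->
    rbg_Y `[xL, xH] N c r t (X r t) <= rbg_Y `[xL, xH] N c r t y.
Hypothesis X_meas : forall t, measurable_fun (`](-1), 1[ : set R) (fun r => X r t).

Local Notation F := (`[xL, xH]%classic : set R).
Local Notation a := (N 1).
Local Notation W k := (rbg_w F N c k).

Lemma in_F x : F x = (xL <= x <= xH).
Proof. by rewrite /= in_itv. Qed.

Lemma xL_in_F : F xL.
Proof. by rewrite in_F lexx xL_le_xH. Qed.

Lemma F_ge0 x : F x -> 0 <= x.
Proof. by rewrite in_F => /andP[/(le_trans xL_ge0)]. Qed.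

Lemma N_ge0 x : 0 <= N x.
Proof. by case: N_norm. Qed.

Lemma N_ge0E x : 0 <= x -> N x = a * x.
Proof. by move=> x_ge0; rewrite (is_normE N_norm) ger0_norm // mulrC. Qed.

Lemma N_F_le x : F x -> N x <= a * xH.
Proof.
move=> Fx; rewrite N_ge0E ?F_ge0 // ler_pM2l ?(is_norm1_gt0 N_norm) //.
by move: Fx; rewrite in_F => /andP[].
Qed.

Lemma c_F_ge0 k y : (k < T)%N -> F y -> 0 <= c k.+1 y.
Proof. by move=> kT; rewrite in_F; apply: c_ge0; rewrite kT. Qed.

Lemma rbg_wS k x : W k.+1 x = inf [set W k y + c k.+1 y + N (x - y) | y in F].
Proof. by []. Qed.

Lemma rbg_w_ge0 k x : (k <= T)%N -> 0 <= W k x.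
Proof.
elim: k x => [x _|k IH x kT]; first exact: N_ge0.
rewrite rbg_wS; apply: (le_inf_img xL_in_F) => z Fz.
have := IH z (ltnW kT); have := N_ge0 (x - z); have := c_F_ge0 kT Fz; lra.
Qed.

Lemma rbg_w_succ_le k x y : (k < T)%N -> F y ->
  W k.+1 x <= W k y + c k.+1 y + N (x - y).
Proof.
move=> kT Fy; rewrite rbg_wS; apply: (inf_img_le 0) => // z Fz.
have := rbg_w_ge0 z (ltnW kT); have := N_ge0 (x - z); have := c_F_ge0 kT Fz; lra.
Qed.

(* The minimum of Y^{k+1} over F when the random draw is r. *)
Definition rbg_value k r := inf [set W k x + r * N x | x in F].

Local Notation rbg_value' k r := (inf [set W k y + c k.+1 y + r * N y | y in F]).

Lemma rbg_value_le k r y : (k <= T)%N -> -1 <= r -> F y ->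
  rbg_value k r <= W k y + r * N y.
Proof.
move=> kT r1 Fy; apply: (inf_img_le (- (a * xH))) => // z Fz.
have := rbg_w_ge0 z kT; have := N_F_le Fz; have := N_ge0 z; nra.
Qed.

Lemma le_rbg_value k r b : (forall y, F y -> b <= W k y + r * N y) -> b <= rbg_value k r.
Proof. exact: le_inf_img xL_in_F. Qed.

Lemma rbg_value'_le k r y : (k < T)%N -> -1 <= r -> F y ->
  rbg_value' k r <= W k y + c k.+1 y + r * N y.
Proof.
move=> kT r1 Fy; apply: (inf_img_le (- (a * xH))) => // z Fz.
have := rbg_w_ge0 z (ltnW kT); have := N_F_le Fz; have := N_ge0 z.
have := c_F_ge0 kT Fz; nra.
Qed.

(* For |r| <= 1 the minimisation over x inside w^{k+1} is attained at x = y. *)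
Lemma rbg_value_succE k r : (k < T)%N -> -1 <= r <= 1 ->
  rbg_value k.+1 r = rbg_value' k r.
Proof.
move=> kT /andP[r1 r2]; apply/eqP; rewrite eq_le; apply/andP; split.
  apply: (le_inf_img xL_in_F) => z Fz.
  apply: le_trans (rbg_value_le kT r1 Fz) _.
  by have := rbg_w_succ_le z kT Fz; rewrite subrr (N_ge0E (lexx 0)) mulr0; lra.
apply: le_rbg_value => x Fx.
suff : rbg_value' k r - r * N x <= W k.+1 x by lra.
rewrite rbg_wS; apply: (le_inf_img xL_in_F) => y Fy.
have := rbg_value'_le kT r1 Fy.
rewrite (N_ge0E (F_ge0 Fy)) (N_ge0E (F_ge0 Fx)) (is_normE N_norm (x - y)).
have : r * (y - x) <= `|x - y|.
  rewrite distrC; have [yx|yx] := lerP 0 (y - x).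
    by rewrite ger0_norm //; nra.
  by rewrite ltr0_norm //; nra.
have := is_norm1_gt0 N_norm; nra.
Qed.

Lemma rbg_choice_index k : (k <= T)%N -> (1 <= k.+1 <= T.+1)%N.
Proof. by rewrite ltnS. Qed.

Lemma rbg_valueE k r : (k <= T)%N -> -1 < r < 1 ->
  rbg_value k r = W k (X r k.+1) + r * N (X r k.+1).
Proof.
move=> kT r1; have [XF Xmin] := X_choice r1 (rbg_choice_index kT).
apply/eqP; rewrite eq_le; apply/andP; split.
  by apply: rbg_value_le => //; case/andP: r1 => /ltW.
by apply: le_rbg_value => y; rewrite in_F => /Xmin.
Qed.

Lemma rbg_value_le_succ k r : (k < T)%N -> -1 <= r <= 1 ->
  rbg_value k r <= rbg_value k.+1 r.
Proof.
move=> kT r1; rewrite (rbg_value_succE kT r1).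
apply: (le_inf_img xL_in_F) => z Fz.
have := rbg_value_le (ltnW kT) (proj1 (andP r1)) Fz; have := c_F_ge0 kT Fz; lra.
Qed.

Local Notation gap k r := (rbg_value k.+1 r - rbg_value k r).

Lemma rbg_gap_le k s r : (k < T)%N -> -1 < s < 1 -> -1 <= r <= 1 ->
  (forall y, F y -> c k.+1 (X s k.+1) <= c k.+1 y \/
     (s - r) * (y - X s k.+1) <= 0) ->
  gap k s <= gap k r.
Proof.
move=> kT sI rI cases.
have sI' : -1 <= s <= 1 by case/andP: sI => ? ?; apply/andP; split; lra.
have [XF _] := X_choice sI (rbg_choice_index (ltnW kT)).
have Gs := rbg_valueE (ltnW kT) sI.
set x := X s k.+1 in XF Gs cases; rewrite -in_F in XF.
rewrite (rbg_value_succE kT sI') (rbg_value_succE kT rI).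
suff : rbg_value' k s + rbg_value k r - rbg_value k s <= rbg_value' k r by lra.
apply: (le_inf_img xL_in_F) => y Fy.
have r1 := proj1 (andP rI).
have := rbg_value_le (ltnW kT) r1 Fy; have := rbg_value_le (ltnW kT) r1 XF.
have := rbg_value'_le kT (proj1 (andP sI')) Fy.
have := rbg_value'_le kT (proj1 (andP sI')) XF.
have [cxy|] := cases y Fy; first lra.
rewrite (N_ge0E (F_ge0 Fy)) (N_ge0E (F_ge0 XF)) in Gs *.
have := is_norm1_gt0 N_norm; nra.
Qed.

Lemma rbg_gap_quasiconvex k r s u : (k < T)%N ->
  -1 <= r -> r < s -> s < u -> u <= 1 -> gap k s <= Num.max (gap k r) (gap k u).
Proof.
move=> kT r1 rs su u1.
have sI : -1 < s < 1 by apply/andP; split; lra.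
have [XF _] := X_choice sI (rbg_choice_index (ltnW kT)); rewrite -in_F in XF.
have k1 : (1 <= k.+1 <= T)%N by rewrite kT.
rewrite le_max; have [c_right|c_left] := convex_on_monotone_split (c_convex k1) XF.
- apply/orP; left; apply: rbg_gap_le => //; first by apply/andP; split; lra.
  move=> y Fy; have [xy|yx] := leP (X s k.+1) y; first by left; apply: c_right.
  by right; nra.
- apply/orP; right; apply: rbg_gap_le => //; first by apply/andP; split; lra.
  move=> y Fy; have [yx|xy] := leP y (X s k.+1); first by left; apply: c_left.
  by right; nra.
Qed.

Lemma rbg_value_supergrad_of_bound k r s x0 : (k <= T)%N -> -1 <= s ->
  (forall y, F y -> 0 <= (s - r) * (x0 - y)) ->
  rbg_value k s <= rbg_value k r + (s - r) * a * x0.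
Proof.
move=> kT s1 x0_bound.
suff : rbg_value k s - (s - r) * a * x0 <= rbg_value k r by lra.
apply: le_rbg_value => y Fy.
have := rbg_value_le kT s1 Fy; have := x0_bound y Fy.
rewrite (N_ge0E (F_ge0 Fy)); have := is_norm1_gt0 N_norm; nra.
Qed.

(* At r = -1 and r = 1 no RBG choice is given; xH and xL still yield supergradients
   of the value function there. *)
Definition rbg_choice_ext t r := if r == -1 then xH else if r == 1 then xL else X r t.

Lemma rbg_choice_extE t r : -1 < r < 1 -> rbg_choice_ext t r = X r t.
Proof. by case/andP=> r1 r2; rewrite /rbg_choice_ext gt_eqF // lt_eqF. Qed.

Lemma rbg_choice_ext_range t r : (1 <= t <= T.+1)%N -> -1 <= r <= 1 ->
  xL <= rbg_choice_ext t r <= xH.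
Proof.
move=> tT rI; rewrite /rbg_choice_ext.
have [_|rN1] := eqVneq r (-1); first by rewrite lexx xL_le_xH.
have [_|r_1] := eqVneq r 1; first by rewrite lexx xL_le_xH.
by case: (X_choice (itv_interior rI rN1 r_1) tT).
Qed.

Lemma rbg_value_supergrad k r s : (k <= T)%N -> -1 <= r <= 1 -> -1 <= s <= 1 ->
  rbg_value k s <= rbg_value k r + (s - r) * a * rbg_choice_ext k.+1 r.
Proof.
move=> kT rI' /andP[s1 s2]; rewrite /rbg_choice_ext.
have [->|rN1] := eqVneq r (-1).
  by apply: rbg_value_supergrad_of_bound => // y; rewrite in_F => /andP[_ ?]; nra.
have [->|r_1] := eqVneq r 1.
  by apply: rbg_value_supergrad_of_bound => // y; rewrite in_F => /andP[? _]; nra.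
have rI := itv_interior rI' rN1 r_1.
have [XF _] := X_choice rI (rbg_choice_index kT); rewrite -in_F in XF.
rewrite (rbg_valueE kT rI); have := rbg_value_le kT s1 XF.
by rewrite !(N_ge0E (F_ge0 XF)); lra.
Qed.

Lemma rbg_choice_ext_measurable t :
  measurable_fun (`](-1)%R, 1%R[ : set R) (rbg_choice_ext t).
Proof.
apply/(measurable_fun_eqP _ _).2; last exact: X_meas.
by move=> r; rewrite inE /= in_itv /= => /rbg_choice_extE.
Qed.

Lemma rbg_step_integral_le k : (k < T)%N ->
  (\int[lebesgue_measure]_(r in (`](-1)%R, 1%R[ : set R)) (`|X r k.+2 - X r k.+1|)%:E
   <= ((gap k (-1) + gap k 1) / a)%:E)%E.
Proof.
move=> kT; have kT' := ltnW kT.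
apply: le_trans (@integral_gap_le R _ (is_norm1_gt0 N_norm) xL xH
  (rbg_value k) (rbg_value k.+1) (rbg_choice_ext k.+1) (rbg_choice_ext k.+2)
  _ _ _ _ _ _ (rbg_choice_ext_measurable _) (rbg_choice_ext_measurable _)).
- rewrite le_eqVlt; apply/orP; left; apply/eqP; apply: eq_integral.
  by move=> r; rewrite inE /= in_itv /= => rI; rewrite !rbg_choice_extE.
- by move=> r; apply/rbg_choice_ext_range/rbg_choice_index.
- by move=> r; apply/rbg_choice_ext_range/rbg_choice_index.
- by move=> r s; apply: rbg_value_supergrad.
- by move=> r s; apply: rbg_value_supergrad.
- by move=> r rI; rewrite subr_ge0 rbg_value_le_succ.
- by move=> r s u; apply: rbg_gap_quasiconvex.
Qed.

Lemma rbg_value0_ge0 r : -1 <= r -> 0 <= rbg_value 0 r.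
Proof. by move=> r1; apply: le_rbg_value => y _ /=; have := N_ge0 y; nra. Qed.

Lemma rbg_value_ends_le_mid k : (k <= T)%N ->
  rbg_value k (-1) + rbg_value k 1 <= 2 * rbg_value k 0.
Proof.
move=> kT; suff : (rbg_value k (-1) + rbg_value k 1) / 2 <= rbg_value k 0 by lra.
apply: le_rbg_value => y Fy.
have N11 : -1 <= 1 :> R by lra.
have := rbg_value_le kT (lexx _) Fy; have := rbg_value_le kT N11 Fy; lra.
Qed.

Local Notation path_cost s := (\sum_(1 <= t < T.+1) (c t (s t) + N (s t - s t.-1))).

Lemma rbg_w_le_path_cost (s : nat -> R) : s 0%N = 0 ->
  (forall t, (1 <= t <= T)%N -> F (s t)) -> forall k x, (k <= T)%N ->
  W k x <= \sum_(1 <= t < k.+1) (c t (s t) + N (s t - s t.-1)) + N (x - s k).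
Proof.
move=> s0 sF; elim=> [x _|k IH x kT]; first by rewrite s0 subr0 big_geq // add0r.
have Fsk : F (s k.+1) by apply: sF; rewrite kT.
rewrite big_nat_recr //=.
have := rbg_w_succ_le x kT Fsk; have := IH (s k.+1) (ltnW kT); lra.
Qed.

Lemma le_opt_cost b :
  (forall s : nat -> R, s 0%N = 0 -> (forall t, (1 <= t <= T)%N -> F (s t)) ->
     b <= path_cost s) ->
  b <= opt_cost F N c T.
Proof.
move=> b_le; pose s0 t : R := if t == 0%N then 0 else xL.
have s0F : s0 0%N = 0 /\ forall t, (1 <= t <= T)%N -> F (s0 t).
  by split=> // t /andP[t1 _]; rewrite /s0 gt_eqF //; apply: xL_in_F.
apply: lb_le_inf; first by exists (path_cost s0), s0.
by move=> _ [s [s_0 sF] <-]; apply: b_le.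
Qed.

Lemma opt_cost_ge0 : 0 <= opt_cost F N c T.
Proof.
apply: le_opt_cost => s _ sF; rewrite big_nat_cond; apply: sumr_ge0 => t.
rewrite andbT ltnS => tT; apply: addr_ge0 (N_ge0 _).
by apply: c_ge0 => //; rewrite -in_F; apply: sF.
Qed.

Lemma rbg_value_le_opt_cost : (0 < T)%N -> rbg_value T 0 <= opt_cost F N c T.
Proof.
move=> T_gt0; apply: le_opt_cost => s s0 sF.
have FsT : F (s T) by apply: sF; rewrite T_gt0 leqnn.
have := rbg_value_le (leqnn T) (lerN10 R) FsT.
have := rbg_w_le_path_cost s0 sF (s T) (leqnn T).
by rewrite subrr (N_ge0E (lexx 0)) !mul0r mulr0; lra.
Qed.

Lemma rbg_gap_sum_le_opt_cost :
  \sum_(0 <= k < T) (gap k (-1) + gap k 1) <= 2 * opt_cost F N c T.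
Proof.
have [T0|T_gt0] := posnP T.
  by rewrite big_geq ?mulr_ge0 ?opt_cost_ge0 // T0.
rewrite (@telescope_sumr_eq _ _ _ (fun k => rbg_value k (-1) + rbg_value k 1)) //;
  last by move=> k _; lra.
have N11 : -1 <= 1 :> R by lra.
have := rbg_value0_ge0 (lexx _); have := rbg_value0_ge0 N11.
have := rbg_value_ends_le_mid (leqnn T); have := rbg_value_le_opt_cost T_gt0; lra.
Qed.

Lemma measurable_abs_rbg_step t :
  measurable_fun (`](-1)%R, 1%R[ : set R) (fun r => `|X r t.+1 - X r t|).
Proof.
apply: measurableT_comp; first exact: measurable_realfun.normr_measurable.
exact: measurable_realfun.measurable_funB.
Qed.

Lemma rbg_integral_abs_steps_le :
  (\int[lebesgue_measure]_(r in (`](-1)%R, 1%R[ : set R))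
     (\sum_(1 <= t < T.+1) `|X r t.+1 - X r t|)%:E
   <= (2 * opt_cost F N c T / a)%:E)%E.
Proof.
have -> : (fun r => (\sum_(1 <= t < T.+1) `|X r t.+1 - X r t|)%:E) =
    (fun r => \sum_(0 <= k < T) (`|X r k.+2 - X r k.+1|)%:E).
  by apply/funext => r; rewrite big_add1 sumEFin.
rewrite ge0_integral_sum //; last first.
  by move=> k; apply/measurable_realfun.measurable_EFinP; exact: measurable_abs_rbg_step.
apply: le_trans (_ : (\sum_(0 <= k < T) ((gap k (-1) + gap k 1) / a)%:E <= _)%E).
  rewrite big_nat_cond [X in (_ <= X)%E]big_nat_cond.
  by apply: lee_sum => k /andP[/andP[_ kT] _]; apply: rbg_step_integral_le.
rewrite sumEFin lee_fin -mulr_suml ler_pM2r ?invr_gt0 ?is_norm1_gt0 //.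
exact: rbg_gap_sum_le_opt_cost.
Qed.

End RBG.

Theorem lemma5 (R : realType) (xL xH : R) (nrm N : R -> R) (theta : R)
  (T : nat) (c : nat -> R -> R) (X : R -> nat -> R) :
  0 <= xL -> xL <= xH ->
  is_norm nrm ->
  1 <= theta ->
  is_norm N -> N 1 = theta * nrm 1 ->
  (forall t, (1 <= t <= T)%N -> forall x, xL <= x <= xH -> 0 <= c t x) ->
  (forall t, (1 <= t <= T)%N -> convex_on `[xL, xH] (c t)) ->
  (exists G : R, forall t, (1 <= t <= T)%N -> forall x, xL <= x <= xH ->
     exists g, subgradient `[xL, xH] (c t) x g /\ `|g| <= G) ->
  (* X r t = x^t chosen by RBG(N) with random draw r: a minimizer of Y^t over F *)
  (forall r, -1 < r < 1 -> forall t, (1 <= t <= T.+1)%N ->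
     xL <= X r t <= xH /\
     forall y, xL <= y <= xH ->
       rbg_Y `[xL, xH] N c r t (X r t) <= rbg_Y `[xL, xH] N c r t y) ->
  (forall t, measurable_fun (`](-1), 1[ : set R) (fun r : R => X r t)) ->
  (((2%:R : R)^-1)%:E *
    (\int[@lebesgue_measure R]_(r in (`](-1)%R, 1%R[ : set R)) (switching_cost nrm T (X r))%:E)
  <= (opt_cost `[xL, xH] N c T / theta)%:E)%E.
Proof.
move=> xL_ge0 xL_le_xH nrm_norm theta_ge1 N_norm N1 c_ge0 c_convex _ X_choice X_meas.
have nrm1_gt0 := is_norm1_gt0 nrm_norm.
have theta_gt0 : 0 < theta := lt_le_trans ltr01 theta_ge1.
have steps := rbg_integral_abs_steps_le xL_ge0 xL_le_xH N_norm c_ge0 c_convex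
  X_choice X_meas.
rewrite N1 in steps.
under eq_integral => r _ do
  rewrite /switching_cost (eq_bigr _ (fun t _ => is_normE nrm_norm _)) -mulr_suml
    mulrC EFinM.
rewrite ge0_integralZl_EFin ?(ltW nrm1_gt0) //; last first.
  apply/measurable_realfun.measurable_EFinP; apply: measurable_sum => t.
  exact: measurable_abs_rbg_step.
  by move=> r _; rewrite lee_fin sumr_ge0.
apply: le_trans (lee_wpmul2l _ (lee_wpmul2l _ steps)) _.
- by rewrite lee_fin invr_ge0.
- by rewrite lee_fin ltW.
rewrite -!EFinM lee_fin le_eqVlt; apply/orP; left; apply/eqP.
by field; rewrite !gt_eqF.
Qed.
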